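(* If $\Delta\,\mathcal{R}\,\Theta$ with $\mathcal{R}$ a cs-bisimulation up to convex hull, then $\Delta \sim_{cs} \Theta$.
   Context: For a relation $\mathcal{R}$ on distributions, its convex hull $Cv(\mathcal{R})$ is the least relation containing $(\sum_{i\in I} p_i\cdot\Delta_i,\ \sum_{i\in I} p_i\cdot\Theta_i)$ whenever $\Delta_i \mathcal{R} \Theta_i$ for all $i$ and $\sum_i p_i = 1$. lqCCS extended configurations $\langle\!\langle \rho, P, R \rangle\!\rangle$ consist of a density operator, a process, and an observer (a process without $\tau$ and restriction whose sums are only sums of inputs on distinct channels); contexts are $O[\cdot] = [\cdot] \parallel R'$ with $R'$ an observer. The enhanced semantics has transitions $\rightsquigarrow_\pi$ indexed by $\pi = \diamond$ (only the process moves) or $\pi \in \{\ell,r\}^*$ (naming the observer component that acts), lifted to distributions so that all configurations in the support move with the same index. A relation $\mathcal{R}$ is a cs-bisimulation up to convex hull if $\Delta\mathcal{R}\Theta$ implies, for every context $O[\cdot]$: $\Delta$ and $\Theta$ satisfy the same barbs (probability of being ready to output on each free channel, and probability of deadlock $\bot$); whenever $O[\Delta] \rightsquigarrow_\pi \Delta'$ there is $\Theta'$ with $O[\Theta] \rightsquigarrow_\pi \Theta'$ and $\Delta'\,Cv(\mathcal{R})\,\Theta'$; and symmetrically. $\sim_{cs}$ is the largest relation satisfying the same conditions with $\mathcal{R}$ in place of $Cv(\mathcal{R})$. *)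

From HB Require Import structures.
From mathcomp Require Import all_boot all_order all_algebra.
From mathcomp Require Import boolp classical_sets functions cardinality fsbigop reals.
Set Implicit Arguments. Unset Strict Implicit. Unset Printing Implicit Defensive.
Import Order.TTheory GRing.Theory Num.Theory.
Local Open Scope classical_set_scope.
Local Open Scope ring_scope.

(* Abstract presentation of the lqCCS enhanced semantics:
   - Conf : extended configurations <<rho, P, R>>;
   - Obs  : observers R' (contexts O[.] = [.] || R');
   - plug O c : the configuration O[c];
   - Idx  : transition indices, None = diamond, Some pi with pi in {l,r}^* (true = l);
   - step c pi D : the enhanced transition c ~>_pi D on configurations;
   - Barb : barb labels (free output channels and deadlock _|_),
     ready c b : configuration c exhibits barb b. *)

Definition Idx := option (seq bool).

Section LQCCS.
Variables (R : realType) (Conf : choiceType) (Obs Barb : Type).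
Variable plug : Obs -> Conf -> Conf.
Variable step : Conf -> Idx -> (Conf -> R) -> Prop.
Variable ready : Conf -> Barb -> bool.

Definition is_dist (D : Conf -> R) : Prop :=
  (forall c, 0 <= D c) /\ finite_set (D @^-1` [set~ 0]) /\
  \sum_(c \in [set: Conf]) D c = 1.

Definition dirac (c : Conf) : Conf -> R := fun x => (x == c)%:R.

Definition ctx (O : Obs) (D : Conf -> R) : Conf -> R :=
  fun c' => \sum_(c \in [set c | plug O c = c']) D c.

Definition barb (D : Conf -> R) (b : Barb) : R :=
  \sum_(c \in [set c | ready c b]) D c.

Definition lstep (D : Conf -> R) (pi : Idx) (D' : Conf -> R) : Prop :=
  exists n (p : 'I_n -> R) (c : 'I_n -> Conf) (E : 'I_n -> Conf -> R),
    (forall i, 0 < p i) /\ (forall i, step (c i) pi (E i)) /\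
    D = (fun x => \sum_(i < n) p i * dirac (c i) x) /\
    D' = (fun x => \sum_(i < n) p i * E i x).

Definition rel := (Conf -> R) -> (Conf -> R) -> Prop.

Definition Cv (Rl : rel) : rel := fun D T =>
  exists n (p : 'I_n -> R) (Ds Ts : 'I_n -> Conf -> R),
    (forall i, 0 <= p i) /\ \sum_(i < n) p i = 1 /\
    (forall i, Rl (Ds i) (Ts i)) /\
    D = (fun x => \sum_(i < n) p i * Ds i x) /\
    T = (fun x => \sum_(i < n) p i * Ts i x).

Definition cs_progress (Rl Rl' : rel) : Prop :=
  forall D T, Rl D T ->
    is_dist D /\ is_dist T /\
    forall O : Obs,
      (forall b, barb (ctx O D) b = barb (ctx O T) b) /\
      (forall pi D', lstep (ctx O D) pi D' ->
         exists T', lstep (ctx O T) pi T' /\ Rl' D' T') /\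
      (forall pi T', lstep (ctx O T) pi T' ->
         exists D', lstep (ctx O D) pi D' /\ Rl' D' T').

Definition cs_bisim (Rl : rel) := cs_progress Rl Rl.
Definition cs_bisim_upto_cv (Rl : rel) := cs_progress Rl (Cv Rl).

Definition cs_bisimilar : rel := fun D T => exists Rl, cs_bisim Rl /\ Rl D T.

End LQCCS.

(* Cv R is itself a cs-bisimulation, and it contains R.  Barbs are linear in
   the distribution.  A lifted transition of O[sum_i p_i Delta_i] splits into
   lifted transitions of the O[Delta_i]: every step of it from a configuration
   c is shared among the components in proportion to their mass at c.  Each
   component step is answered by the up-to-convex-hull clause for
   Delta_i R Theta_i, the answers recombine into a transition of
   O[sum_i p_i Theta_i], and the resulting convex combination of Cv R-related
   pairs is again in Cv R.  Lifted transitions and convex hulls are both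
   instances of [conic_lift], the lifting of a relation to positive finite
   combinations, which is closed under sums and positive scalings. *)

From Pilot Require Import Defs.
From mathcomp Require Import all_boot all_order all_algebra.
From mathcomp Require Import boolp classical_sets functions cardinality fsbigop reals.
From mathcomp Require Import finmap ring.
Set Implicit Arguments. Unset Strict Implicit. Unset Printing Implicit Defensive.
Import Order.TTheory GRing.Theory Num.Theory.
Local Open Scope classical_set_scope.
Local Open Scope ring_scope.

Local Notation supp F := (F @^-1` [set~ 0]).

Section SumMullFun.
Variables (R : pzRingType) (T : Type).

Lemma sum_mull_fun (I : finType) (p : I -> R) (F : I -> T -> R) :
  \sum_i p i \*o F i = (fun x => \sum_i p i * F i x).
Proof. exact: fct_sumE. Qed.

Lemma sum_mull_funE (I : finType) (p : I -> R) (F : I -> T -> R) x :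
  (\sum_i p i \*o F i) x = \sum_i p i * F i x.
Proof. by rewrite sum_mull_fun. Qed.

End SumMullFun.

Section FiniteSupport.
Variables (R : pzRingType) (T : choiceType).

Lemma supp_sum_mull_fun (I : finType) (p : I -> R) (F : I -> T -> R) :
  supp (\sum_i p i \*o F i) `<=` \bigcup_i supp (F i).
Proof.
move=> x sum_neq0; apply: contrapT => x_notin; apply: sum_neq0.
rewrite sum_mull_funE big1 // => i _.
suff -> : F i x = 0 by rewrite mulr0.
by apply: contrapT => Fx; apply: x_notin; exists i.
Qed.

Lemma finite_supp_sum_mull_fun (I : finType) (p : I -> R) (F : I -> T -> R) :
  (forall i, finite_set (supp (F i))) -> finite_set (supp (\sum_i p i \*o F i)).
Proof.
move=> finF; apply: sub_finite_set (supp_sum_mull_fun (p := p) (F := F)) _.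
by apply: bigcup_finite => // i _; exact: finF.
Qed.

Lemma fsbig_sum_mull_fun (I : finType) (A : set T) (p : I -> R)
    (F : I -> T -> R) :
  (forall i, finite_set (supp (F i))) ->
  \sum_(x \in A) (\sum_i p i \*o F i) x = \sum_i p i * \sum_(x \in A) F i x.
Proof.
move=> finF; pose S := A `&` \bigcup_i supp (F i).
have finS : finite_set S.
  by apply/finite_setIr/bigcup_finite => // i _; exact: finF.
have restrictS (G : T -> R) : supp G `<=` \bigcup_i supp (F i) ->
    \sum_(x \in A) G x = \sum_(x <- fset_set S) G x.
  move=> suppG; rewrite -fsbig_finite // -(fsbig_widen S A) //.
  - by move=> x [].
  - move=> x [Ax /not_andP [//|x_notin]] /=.
    by apply: contrapT => Gx; apply: x_notin; exact: suppG.
rewrite restrictS; last exact: supp_sum_mull_fun.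
under eq_bigr do rewrite sum_mull_funE.
rewrite exchange_big /=; apply: eq_bigr => i _.
by rewrite (restrictS (F i)) ?mulr_sumr // => x Fx; exists i.
Qed.

End FiniteSupport.

Section ConicLift.
Variables (R : numDomainType) (T : Type).
Variable Q : (T -> R) -> (T -> R) -> Prop.

Definition conic_lift (s : R) (u v : T -> R) : Prop :=
  exists (I : finType) (p : I -> R) (x y : I -> T -> R),
    [/\ forall i, 0 < p i, \sum_i p i = s, forall i, Q (x i) (y i),
        u = \sum_i p i \*o x i & v = \sum_i p i \*o y i].

Lemma conic_lift_ge0 (I : finType) (p : I -> R) (x y : I -> T -> R) :
  (forall i, 0 <= p i) -> (forall i, 0 < p i -> Q (x i) (y i)) ->
  conic_lift (\sum_i p i) (\sum_i p i \*o x i) (\sum_i p i \*o y i).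
Proof.
move=> p_ge0 Qxy; pose J := {i in [pred i | 0 < p i]}.
have drop0 (M : nmodType) (F : I -> M) :
    (forall i, p i = 0 -> F i = 0) -> \sum_i F i = \sum_(j : J) F (val j).
  move=> F0; rewrite -big_sub [RHS]big_mkcond; apply: eq_bigr => i _.
  case: ifPn => // p_ngt0; rewrite F0 //; apply/eqP.
  by move: (p_ge0 i) p_ngt0; rewrite le0r inE /= => /orP [/eqP ->|->].
have mull0 (z : I -> T -> R) i : p i = 0 -> p i \*o z i = 0.
  by move=> pi0; apply/funext => t /=; rewrite pi0 mul0r.
rewrite (drop0 _ p) // (drop0 _ _ (mull0 x)) (drop0 _ _ (mull0 y)).
exists J, (fun j => p (val j)), (fun j => x (val j)), (fun j => y (val j)).
by split=> // j; [exact: (valP j) | apply: Qxy; exact: (valP j)].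
Qed.

Lemma conic_lift0 : conic_lift 0 0 0.
Proof.
exists 'I_0, (fun=> 0), (fun=> 0), (fun=> 0).
split; try by rewrite big_ord0.
all: by move=> [m]; rewrite ltn0.
Qed.

Lemma conic_liftD s1 u1 v1 s2 u2 v2 :
  conic_lift s1 u1 v1 -> conic_lift s2 u2 v2 ->
  conic_lift (s1 + s2) (u1 + u2) (v1 + v2).
Proof.
move=> [I1 [p1 [x1 [y1 [p1_gt0 <- Q1 -> ->]]]]].
move=> [I2 [p2 [x2 [y2 [p2_gt0 <- Q2 -> ->]]]]].
pose glue A (f1 : I1 -> A) (f2 : I2 -> A) (k : I1 + I2) :=
  match k with inl i => f1 i | inr j => f2 j end.
exists (I1 + I2)%type, (glue _ p1 p2), (glue _ x1 x2), (glue _ y1 y2).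
by split; try case; rewrite ?big_sumType.
Qed.

Lemma conic_liftZ a s u v :
  0 < a -> conic_lift s u v -> conic_lift (a * s) (a \*o u) (a \*o v).
Proof.
move=> a_gt0 [I [p [x [y [p_gt0 <- Qxy -> ->]]]]].
have scale (z : I -> T -> R) :
    a \*o \sum_i p i \*o z i = \sum_i (a * p i) \*o z i.
  apply/funext => t /=; rewrite !sum_mull_funE mulr_sumr.
  by under eq_bigr do rewrite mulrA.
exists I, (fun i => a * p i), x, y; split; rewrite ?scale ?mulr_sumr //.
by move=> i; exact: mulr_gt0.
Qed.

Lemma conic_lift_sum (I : finType) (p s : I -> R) (u v : I -> T -> R) :
  (forall i, 0 < p i) -> (forall i, conic_lift (s i) (u i) (v i)) ->
  conic_lift (\sum_i p i * s i) (\sum_i p i \*o u i) (\sum_i p i \*o v i).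
Proof.
move=> p_gt0 uv; apply: (big_ind3 conic_lift).
- exact: conic_lift0.
- by move=> s1 u1 v1 s2 u2 v2; exact: conic_liftD.
- by move=> i _; exact: conic_liftZ.
Qed.

Lemma conic_lift_ord s u v : conic_lift s u v ->
  exists n (p : 'I_n -> R) (x y : 'I_n -> T -> R),
    [/\ forall i, 0 < p i, \sum_i p i = s, forall i, Q (x i) (y i),
        u = \sum_i p i \*o x i & v = \sum_i p i \*o y i].
Proof.
move=> [I [p [x [y [p_gt0 <- Qxy -> ->]]]]].
have enumE (M : nmodType) (F : I -> M) :
    \sum_i F i = \sum_(k < #|I|) F (enum_val k).
  by rewrite -big_enum_val.
exists #|I|, (fun k => p (enum_val k)), (fun k => x (enum_val k)),
  (fun k => y (enum_val k)).
by split; rewrite // !enumE.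
Qed.

End ConicLift.

Lemma conic_lift_flatten (R : numDomainType) (T : Type)
    (Q : (T -> R) -> (T -> R) -> Prop) s u v :
  conic_lift (conic_lift Q 1) s u v -> conic_lift Q s u v.
Proof.
move=> [I [p [x [y [p_gt0 <- Qxy -> ->]]]]].
rewrite (_ : \sum_i p i = \sum_i p i * 1); first exact: conic_lift_sum.
by apply: eq_bigr => i _; rewrite mulr1.
Qed.

Section CsBisimulationUpToConvexHull.
Variables (R : realType) (Conf : choiceType) (Obs Barb : Type).
Variable plug : Obs -> Conf -> Conf.
Variable step : Conf -> Idx -> (Conf -> R) -> Prop.
Variable ready : Conf -> Barb -> bool.

Local Notation lstep := (lstep step).
Local Notation ctx := (ctx plug).
Local Notation barb := (barb ready).
Local Notation cs_progress := (cs_progress plug step ready).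

Lemma CvP (Rl : (Conf -> R) -> (Conf -> R) -> Prop) D T :
  Cv Rl D T <-> conic_lift Rl 1 D T.
Proof.
split.
- move=> [n [p [Ds [Ts [p_ge0 [p1 [Rl_DT [-> ->]]]]]]]].
  have := conic_lift_ge0 (Q := Rl) p_ge0 (fun i _ => Rl_DT i).
  by rewrite p1 !sum_mull_fun.
- case/conic_lift_ord => n [p [Ds [Ts [p_gt0 p1 Rl_DT -> ->]]]].
  exists n, p, Ds, Ts; rewrite !sum_mull_fun.
  by split=> [i|]; [exact: ltW | do !split].
Qed.

Definition dirac_step (pi : Idx) (X Y : Conf -> R) : Prop :=
  exists c, X = dirac R c /\ step c pi Y.

Lemma lstepP D pi D' :
  lstep D pi D' <-> exists s, conic_lift (dirac_step pi) s D D'.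
Proof.
split.
- move=> [n [p [c [E [p_gt0 [stepE [-> ->]]]]]]]; exists (\sum_i p i).
  have := conic_lift_ge0 (Q := dirac_step pi) (x := fun i => dirac R (c i))
    (y := E) (fun i => ltW (p_gt0 i)).
  by rewrite !sum_mull_fun; apply=> i _; exists (c i); split; last exact: stepE.
- move=> [s /conic_lift_ord [n [p [X [E [p_gt0 _ XE -> ->]]]]]].
  have /choice [c cE] : forall i, exists c, X i = dirac R c /\ step c pi (E i).
    exact: XE.
  have -> : X = fun i => dirac R (c i) by apply/funext => i; case: (cE i).
  exists n, p, c, E; rewrite !sum_mull_fun.
  by split=> //; split=> [i|//]; case: (cE i).
Qed.

Lemma lstep_sum (I : finType) (p : I -> R) (A B : I -> Conf -> R) pi :
  (forall i, 0 < p i) -> (forall i, lstep (A i) pi (B i)) ->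
  lstep (\sum_i p i \*o A i) pi (\sum_i p i \*o B i).
Proof.
move=> p_gt0 AB.
have /choice [s sAB] :
    forall i, exists s, conic_lift (dirac_step pi) s (A i) (B i).
  by move=> i; apply/lstepP.
by apply/lstepP; exists (\sum_i p i * s i); exact: conic_lift_sum.
Qed.

Lemma lstep_sum_inv (I : finType) (p : I -> R) (A : I -> Conf -> R) pi D' :
  (forall i, 0 < p i) -> (forall i x, 0 <= A i x) ->
  lstep (\sum_i p i \*o A i) pi D' ->
  exists B : I -> Conf -> R,
    (forall i, lstep (A i) pi (B i)) /\ D' = \sum_i p i \*o B i.
Proof.
move=> p_gt0 A_ge0 [n [q [c [E [q_gt0 [stepE [wE ->]]]]]]].
set w := \sum_i p i \*o A i in wE.
have w_dirac x : w x = \sum_j q j * dirac R (c j) x by rewrite wE.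
have w_gt0 j : 0 < w (c j).
  rewrite w_dirac (bigD1 j) //= /dirac eqxx mulr1 ltr_pwDl //.
  by apply: sumr_ge0 => k _; rewrite mulr_ge0 ?ler0n ?ltW.
have A_share i x : A i x = A i x / w x * w x.
  have [w0|w_neq0] := eqVneq (w x) 0; last by rewrite divfK.
  have sum0 : \sum_k p k * A k x = 0 by rewrite -sum_mull_funE.
  have /eqP : p i * A i x = 0.
    apply: (psumr_eq0P _ sum0) => // k _.
    exact: mulr_ge0 (ltW (p_gt0 k)) (A_ge0 k x).
  by rewrite mulf_eq0 gt_eqF ?p_gt0 //= => /eqP ->; rewrite !mul0r.
(* component [i] takes the share [A i (c j) / w (c j)] of the [j]-th step *)
pose r i j := q j * (A i (c j) / w (c j)).
exists (fun i => \sum_j r i j \*o E j); split.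
- move=> i /=; apply/lstepP; exists (\sum_j r i j).
  have -> : A i = \sum_j r i j \*o dirac R (c j).
    apply/funext => x.
    rewrite sum_mull_funE (A_share i x) {2}(w_dirac x) mulr_sumr.
    apply: eq_bigr => j _; rewrite /r /dirac; have [->|_] := eqVneq x (c j).
      by ring.
    by rewrite !mulr0.
  apply: conic_lift_ge0 => [j|j _]; last by exists (c j); split; [|exact: stepE].
  exact: mulr_ge0 (ltW (q_gt0 j)) (divr_ge0 (A_ge0 i (c j)) (ltW (w_gt0 j))).
- apply/funext => y /=; rewrite sum_mull_funE.
  under [RHS]eq_bigr do rewrite sum_mull_funE mulr_sumr.
  rewrite exchange_big /=; apply: eq_bigr => j _.
  have wc : w (c j) = \sum_i p i * A i (c j) by exact: sum_mull_funE.
  rewrite -[LHS]mul1r -(divff (lt0r_neq0 (w_gt0 j))) {1}wc !mulr_suml.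
  by apply: eq_bigr => i _; rewrite /r; ring.
Qed.

Lemma ctx_sum O (I : finType) (p : I -> R) (F : I -> Conf -> R) :
  (forall i, finite_set (supp (F i))) ->
  ctx O (\sum_i p i \*o F i) = \sum_i p i \*o ctx O (F i).
Proof.
move=> finF; apply/funext => c'.
by rewrite sum_mull_funE /Defs.ctx fsbig_sum_mull_fun.
Qed.

Lemma barb_sum (I : finType) (p : I -> R) (F : I -> Conf -> R) b :
  (forall i, finite_set (supp (F i))) ->
  barb (\sum_i p i \*o F i) b = \sum_i p i * barb (F i) b.
Proof. exact: fsbig_sum_mull_fun. Qed.

Lemma ctx_finite_supp O (D : Conf -> R) :
  finite_set (supp D) -> finite_set (supp (ctx O D)).
Proof.
move=> finD; apply: (sub_finite_set _ (finite_image (plug O) finD)).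
move=> c' ctx_neq0; apply: contrapT => c'_notin; apply: ctx_neq0.
apply: fsbig1 => c /= plug_c; apply: contrapT => Dc; apply: c'_notin.
by exists c.
Qed.

Lemma ctx_ge0 O (D : Conf -> R) :
  (forall c, 0 <= D c) -> forall c', 0 <= ctx O D c'.
Proof. by move=> D_ge0 c'; apply: fsumr_ge0. Qed.

Lemma is_dist_sum (I : finType) (p : I -> R) (D : I -> Conf -> R) :
  (forall i, 0 <= p i) -> \sum_i p i = 1 -> (forall i, is_dist (D i)) ->
  is_dist (\sum_i p i \*o D i).
Proof.
move=> p_ge0 p1 D_dist; split; [|split].
- move=> c; rewrite sum_mull_funE sumr_ge0 // => i _.
  by rewrite mulr_ge0 //; case: (D_dist i).
- by apply: finite_supp_sum_mull_fun => i; case: (D_dist i) => _ [].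
- rewrite fsbig_sum_mull_fun => [|i]; last by case: (D_dist i) => _ [].
  rewrite -p1; apply: eq_bigr => i _.
  by case: (D_dist i) => _ [_ ->]; rewrite mulr1.
Qed.

Lemma Cv_is_dist Rl Rl' D T :
  cs_progress Rl Rl' -> Cv Rl D T -> is_dist D /\ is_dist T.
Proof.
move=> HR /CvP [I [p [Ds [Ts [p_gt0 p1 Rl_DT -> ->]]]]].
have p_ge0 i : 0 <= p i by exact: ltW.
by split; apply: is_dist_sum => // i; case: (HR _ _ (Rl_DT i)) => [? [? _]].
Qed.

Lemma Cv_barb Rl Rl' D T O b :
  cs_progress Rl Rl' -> Cv Rl D T -> barb (ctx O D) b = barb (ctx O T) b.
Proof.
move=> HR /CvP [I [p [Ds [Ts [_ _ Rl_DT -> ->]]]]].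
have [finDs finTs] : (forall i, finite_set (supp (Ds i))) /\
    (forall i, finite_set (supp (Ts i))).
  by split=> i; case: (HR _ _ (Rl_DT i)) => [[_ [? _]] [[_ [? _]] _]].
rewrite !ctx_sum // !barb_sum => [|i|i]; try exact: ctx_finite_supp.
by apply: eq_bigr => i _; case: (HR _ _ (Rl_DT i)) => _ [_ /(_ O) [->]].
Qed.

Lemma Cv_simulation Rl O pi D T D' :
  cs_progress Rl (Cv Rl) -> Cv Rl D T -> lstep (ctx O D) pi D' ->
  exists T', lstep (ctx O T) pi T' /\ Cv Rl D' T'.
Proof.
move=> HR /CvP [I [p [Ds [Ts [p_gt0 p1 Rl_DT -> ->]]]]].
have [Ds_dist Ts_dist] :
    (forall i, is_dist (Ds i)) /\ (forall i, is_dist (Ts i)).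
  by split=> i; case: (HR _ _ (Rl_DT i)) => [? [? _]].
rewrite ctx_sum => [Dstep|i]; last by case: (Ds_dist i) => _ [].
have ctx_Ds_ge0 i : forall c, 0 <= ctx O (Ds i) c.
  by apply: ctx_ge0; case: (Ds_dist i).
have [D'' [D''_step ->]] := lstep_sum_inv p_gt0 ctx_Ds_ge0 Dstep.
have /choice [T'' T''_sim] :
    forall i, exists T'', lstep (ctx O (Ts i)) pi T'' /\ Cv Rl (D'' i) T''.
  by move=> i; case: (HR _ _ (Rl_DT i)) => _ [_ /(_ O) [_ [sim _]]]; exact: sim.
exists (\sum_i p i \*o T'' i); split.
- rewrite ctx_sum => [|i]; last by case: (Ts_dist i) => _ [].
  by apply: lstep_sum => // i; case: (T''_sim i).
- apply/CvP/conic_lift_flatten.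
  have T''_Cv i : conic_lift Rl 1 (D'' i) (T'' i).
    by case: (T''_sim i) => _ /CvP.
  have := conic_lift_ge0 (fun i => ltW (p_gt0 i)) (fun i _ => T''_Cv i).
  by rewrite p1.
Qed.

Lemma Cv_converse (Rl : (Conf -> R) -> (Conf -> R) -> Prop) D T :
  Cv Rl D T -> Cv (fun u v => Rl v u) T D.
Proof. by move=> [n [p [Ds [Ts [? [? [? [-> ->]]]]]]]]; exists n, p, Ts, Ds.
Qed.

Lemma cs_progress_converse Rl :
  cs_progress Rl (Cv Rl) ->
  cs_progress (fun u v => Rl v u) (Cv (fun u v => Rl v u)).
Proof.
move=> HR D T /HR [T_dist [D_dist sim]]; split=> //; split=> // O.
have [barbE [fwd bwd]] := sim O; split=> [b|]; first by rewrite barbE.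
split=> [pi D' Dstep | pi T' Tstep].
- have [T' [? ?]] := bwd _ _ Dstep.
  by exists T'; split=> //; exact: Cv_converse.
- have [D' [? ?]] := fwd _ _ Tstep.
  by exists D'; split=> //; exact: Cv_converse.
Qed.

Lemma Cv_cs_bisim Rl :
  cs_bisim_upto_cv plug step ready Rl -> cs_bisim plug step ready (Cv Rl).
Proof.
move=> HR D T DT; have [D_dist T_dist] := Cv_is_dist HR DT.
split=> //; split=> // O; split=> [b|]; first exact: Cv_barb HR DT.
split=> [pi D'|pi T' Tstep]; first exact: Cv_simulation.
have [D' [Dstep T'D']] :=
  Cv_simulation (cs_progress_converse HR) (Cv_converse DT) Tstep.
by exists D'; split=> //; exact: Cv_converse T'D'.
Qed.

Lemma sub_Cv (Rl : (Conf -> R) -> (Conf -> R) -> Prop) D T :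
  Rl D T -> Cv Rl D T.
Proof.
move=> DT; exists 1%N, (fun=> 1), (fun=> D), (fun=> T).
by rewrite big_ord1; do !split=> //; apply/funext => x; rewrite big_ord1 mul1r.
Qed.

End CsBisimulationUpToConvexHull.

Theorem proposition4p19 (R : realType) (Conf : choiceType) (Obs Barb : Type)
  (plug : Obs -> Conf -> Conf) (step : Conf -> Idx -> (Conf -> R) -> Prop)
  (ready : Conf -> Barb -> bool)
  (Rl : (Conf -> R) -> (Conf -> R) -> Prop) (D T : Conf -> R) :
  cs_bisim_upto_cv plug step ready Rl -> Rl D T ->
  cs_bisimilar plug step ready D T.
Proof.
move=> HR DT; exists (Cv Rl); split; first exact: Cv_cs_bisim.
exact: sub_Cv.
Qed.
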